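(* Let $\rho_1,\rho_2\in[\lambda_0,\lambda_1]$ be the thresholds defined below. Then the optimal action on the boundary of the rectangle $[\lambda_0,\lambda_1]^2$ is as follows: (a) On $p_2=\lambda_0$: for $\lambda_0\le p_1\le\rho_1$, $(p_1,\lambda_0)\in\Phi_{B_b}$; for $\rho_1<p_1\le\lambda_1$, $(p_1,\lambda_0)\in\Phi_{B_1}$. (b) On $p_2=\lambda_1$: for $\rho_2\le p_1\le\lambda_1$, $(p_1,\lambda_1)\in\Phi_{B_b}$; for $\lambda_0\le p_1<\rho_2$, $(p_1,\lambda_1)\in\Phi_{B_2}$. (c) On $p_1=\lambda_0$: for $\lambda_0\le p_2\le\rho_1$, $(\lambda_0,p_2)\in\Phi_{B_b}$; for $\rho_1<p_2\le\lambda_1$, $(\lambda_0,p_2)\in\Phi_{B_2}$. (d) On $p_1=\lambda_1$: for $\rho_2\le p_2\le\lambda_1$, $(\lambda_1,p_2)\in\Phi_{B_b}$; for $\lambda_0\le p_2<\rho_2$, $(\lambda_1,p_2)\in\Phi_{B_1}$.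
   Context: Fix parameters $0\le\lambda_0\le\lambda_1\le 1$, a discount factor $\beta\in[0,1)$, and rates $0<R_l<R_h<2R_l$. Let $\alpha=\lambda_1-\lambda_0$ and $T(p)=\alpha p+\lambda_0$. The model consists of two independent, identical Gilbert–Elliott channels with $\Pr[\text{good}\mid\text{good}]=\lambda_1$ and $\Pr[\text{good}\mid\text{bad}]=\lambda_0$. The belief state is $(p_1,p_2)\in[0,1]^2$, and there are three actions, $B_b$, $B_1$ and $B_2$. Let $V:[0,1]^2\to\mathbb R$ be the optimal expected total discounted reward, i.e. the unique bounded function satisfying $V=\max\{V_{B_b},V_{B_1},V_{B_2}\}$, where $V_{B_b}(p_1,p_2)=p_1R_l+p_2R_l+\beta[(1-p_1)(1-p_2)V(\lambda_0,\lambda_0)+p_1(1-p_2)V(\lambda_1,\lambda_0)+(1-p_1)p_2V(\lambda_0,\lambda_1)+p_1p_2V(\lambda_1,\lambda_1)]$, $V_{B_1}(p_1,p_2)=p_1R_h+\beta[(1-p_1)V(\lambda_0,T(p_2))+p_1V(\lambda_1,T(p_2))]$, $V_{B_2}(p_1,p_2)=p_2R_h+\beta[(1-p_2)V(T(p_1),\lambda_0)+p_2V(T(p_1),\lambda_1)]$. For $a\in\{B_b,B_1,B_2\}$, the decision region is $\Phi_a=\{(p_1,p_2)\in[0,1]^2: V(p_1,p_2)=V_a(p_1,p_2)\}$. The thresholds $\rho_1,\rho_2\in[\lambda_0,\lambda_1]$ are defined by $\{p_1\in[\lambda_0,\lambda_1]:(p_1,\lambda_0)\in\Phi_{B_b}\}=[\lambda_0,\rho_1]$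 and $\{p_1\in[\lambda_0,\lambda_1]:(p_1,\lambda_1)\in\Phi_{B_b}\}=[\rho_2,\lambda_1]$; the paper establishes that both sets are intervals of this form. *)

From Stdlib Require Import Reals.
Open Scope R_scope.

Definition Tmap (l0 l1 p : R) : R := (l1 - l0) * p + l0.

Definition in01 (x : R) : Prop := 0 <= x <= 1.

Inductive action : Type := ABb | AB1 | AB2.

Definition Vact (l0 l1 beta Rl Rh : R) (V : R -> R -> R) (a : action)
    (p1 p2 : R) : R :=
  match a with
  | ABb => p1 * Rl + p2 * Rl +
          beta * ((1 - p1) * (1 - p2) * V l0 l0 + p1 * (1 - p2) * V l1 l0
                  + (1 - p1) * p2 * V l0 l1 + p1 * p2 * V l1 l1)
  | AB1 => p1 * Rh + beta * ((1 - p1) * V l0 (Tmap l0 l1 p2)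
                            + p1 * V l1 (Tmap l0 l1 p2))
  | AB2 => p2 * Rh + beta * ((1 - p2) * V (Tmap l0 l1 p1) l0
                            + p2 * V (Tmap l0 l1 p1) l1)
  end.

(* V is the optimal value function: bounded on [0,1]^2 and solves the
   Bellman equation V = max {V_Bb, V_B1, V_B2} on [0,1]^2 (its unique such
   solution, by the contraction property, since 0 <= beta < 1). *)
Definition is_optimal_value (l0 l1 beta Rl Rh : R) (V : R -> R -> R) : Prop :=
  (exists M, forall p1 p2, in01 p1 -> in01 p2 -> Rabs (V p1 p2) <= M) /\
  (forall p1 p2, in01 p1 -> in01 p2 ->
     V p1 p2 = Rmax (Vact l0 l1 beta Rl Rh V ABb p1 p2)
                    (Rmax (Vact l0 l1 beta Rl Rh V AB1 p1 p2)
                          (Vact l0 l1 beta Rl Rh V AB2 p1 p2))).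

Definition Phi (l0 l1 beta Rl Rh : R) (V : R -> R -> R) (a : action)
    (p1 p2 : R) : Prop :=
  in01 p1 /\ in01 p2 /\ V p1 p2 = Vact l0 l1 beta Rl Rh V a p1 p2.

From Stdlib Require Import Reals Lra Psatz.
Open Scope R_scope.

(* The optimal value function V inherits two structural properties from the
   value-iteration approximants W_n (W_0 = 0, W_(n+1) = Bellman operator
   applied to W_n), because |V - W_n| <= M beta^n on [0,1]^2:
   - symmetry  V(x,y) = V(y,x), since the model is invariant under swapping
     the two channels;
   - convexity of V in its first argument, since the Bellman operator maps
     functions convex in p1 to functions convex in p1 (B_b and B_1 are affine
     in p1, B_2 is convex in p1, and a maximum of convex functions is convex).
   Convexity together with R_h < 2 R_l gives V_{B_2} <= V_{B_b} below the
   diagonal (p2 <= p1); by symmetry V_{B_1} <= V_{B_b} above it.  Hence on the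
   edge p2 = lambda_0 the optimal action is B_b or B_1, on p2 = lambda_1 it is
   B_b or B_2, and the thresholds rho_1, rho_2 decide between them (parts
   (a), (b)).  Parts (c), (d) follow by the symmetry of the decision regions. *)

Lemma Rabs_le_inv (x e : R) : Rabs x <= e -> - e <= x <= e.
Proof. unfold Rabs; destruct (Rcase_abs x); lra. Qed.

Definition mix (t a b : R) : R := (1 - t) * a + t * b.

Lemma mix_abs_le (t a b e : R) :
  0 <= t <= 1 -> Rabs a <= e -> Rabs b <= e -> Rabs (mix t a b) <= e.
Proof.
  intros Ht Ha Hb; unfold mix.
  apply Rabs_le; apply Rabs_le_inv in Ha; apply Rabs_le_inv in Hb; nra.
Qed.

Lemma mix_le_compat (t a b a' b' : R) :
  0 <= t <= 1 -> a <= a' -> b <= b' -> mix t a b <= mix t a' b'.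
Proof. intros Ht Ha Hb; unfold mix; nra. Qed.

Lemma mix_in01 (t x y : R) : in01 t -> in01 x -> in01 y -> in01 (mix t x y).
Proof. unfold in01, mix; intros; split; nra. Qed.

Lemma max3_convex (t A B C A1 B1 C1 A2 B2 C2 : R) : 0 <= t <= 1 ->
  A <= mix t A1 A2 -> B <= mix t B1 B2 -> C <= mix t C1 C2 ->
  Rmax A (Rmax B C) <= mix t (Rmax A1 (Rmax B1 C1)) (Rmax A2 (Rmax B2 C2)).
Proof.
  unfold mix; intros Ht HA HB HC.
  pose proof (Rmax_l A1 (Rmax B1 C1)); pose proof (Rmax_r A1 (Rmax B1 C1)).
  pose proof (Rmax_l B1 C1); pose proof (Rmax_r B1 C1).
  pose proof (Rmax_l A2 (Rmax B2 C2)); pose proof (Rmax_r A2 (Rmax B2 C2)).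
  pose proof (Rmax_l B2 C2); pose proof (Rmax_r B2 C2).
  repeat apply Rmax_lub; nra.
Qed.

Lemma Rmax_dist_le (a b c d e : R) :
  Rabs (a - c) <= e -> Rabs (b - d) <= e -> Rabs (Rmax a b - Rmax c d) <= e.
Proof.
  intros H1 H2; apply Rabs_le_inv in H1; apply Rabs_le_inv in H2; apply Rabs_le.
  unfold Rmax; destruct (Rle_dec a b); destruct (Rle_dec c d); lra.
Qed.

Lemma le_0_of_geometric (beta d c : R) : 0 <= beta < 1 -> 0 <= c ->
  (forall n, d <= c * beta ^ n) -> d <= 0.
Proof.
  intros Hb Hc H; apply Rnot_lt_le; intro Hd.
  assert (Hab : Rabs beta < 1) by (rewrite Rabs_right; lra).
  destruct (pow_lt_1_zero beta Hab (d / (c + 1))) as [N HN].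
  { apply Rdiv_lt_0_compat; lra. }
  specialize (HN N (le_n N)); specialize (H N).
  assert (Hp : 0 <= beta ^ N) by (apply pow_le; lra).
  rewrite Rabs_right in HN by lra.
  apply Rmult_lt_compat_l with (r := c + 1) in HN; [|lra].
  replace ((c + 1) * (d / (c + 1))) with d in HN by (field; lra).
  nra.
Qed.

Lemma max3_attained_2 (v a b c : R) :
  v = Rmax a (Rmax b c) -> c <= a -> v <> a -> v = b.
Proof. unfold Rmax; destruct (Rle_dec b c); destruct (Rle_dec a _); intros; lra. Qed.

Lemma max3_attained_3 (v a b c : R) :
  v = Rmax a (Rmax b c) -> b <= a -> v <> a -> v = c.
Proof. unfold Rmax; destruct (Rle_dec b c); destruct (Rle_dec a _); intros; lra. Qed.

Section Model.

Variables l0 l1 beta Rl Rh : R.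
Hypothesis Hl0 : 0 <= l0.
Hypothesis Hl01 : l0 <= l1.
Hypothesis Hl1 : l1 <= 1.
Hypothesis Hbeta0 : 0 <= beta.

Notation T := (Tmap l0 l1).
Notation Q := (Vact l0 l1 beta Rl Rh).

Let I0 : in01 l0. Proof. unfold in01; lra. Qed.
Let I1 : in01 l1. Proof. unfold in01; lra. Qed.

Lemma Tmap_in01 (p : R) : in01 p -> in01 (T p).
Proof. unfold in01, Tmap; intros; split; nra. Qed.

Lemma Tmap_mix (t x y : R) : T (mix t x y) = mix t (T x) (T y).
Proof. unfold Tmap, mix; ring. Qed.

Lemma Tmap_as_mix (p : R) : T p = mix p l0 l1.
Proof. unfold Tmap, mix; ring. Qed.

Lemma Vact_sub (W1 W2 : R -> R -> R) (a : action) (p1 p2 : R) :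
  let D := fun x y => W1 x y - W2 x y in
  Q W1 a p1 p2 - Q W2 a p1 p2 =
  beta * match a with
         | ABb => mix p1 (mix p2 (D l0 l0) (D l0 l1)) (mix p2 (D l1 l0) (D l1 l1))
         | AB1 => mix p1 (D l0 (T p2)) (D l1 (T p2))
         | AB2 => mix p2 (D (T p1) l0) (D (T p1) l1)
         end.
Proof. intro D; unfold D, mix; destruct a; simpl; ring. Qed.

Lemma Vact_contraction (W1 W2 : R -> R -> R) (e : R) (a : action) (p1 p2 : R) :
  in01 p1 -> in01 p2 ->
  (forall x y, in01 x -> in01 y -> Rabs (W1 x y - W2 x y) <= e) ->
  Rabs (Q W1 a p1 p2 - Q W2 a p1 p2) <= beta * e.
Proof.
  intros Ip1 Ip2 HW; rewrite (Vact_sub W1 W2 a p1 p2); cbv zeta.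
  rewrite Rabs_mult, (Rabs_right beta) by lra.
  apply Rmult_le_compat_l; [lra|].
  pose proof (Tmap_in01 _ Ip1); pose proof (Tmap_in01 _ Ip2).
  destruct a; repeat apply mix_abs_le; auto.
Qed.

Definition Bell (W : R -> R -> R) : R -> R -> R :=
  fun p1 p2 => Rmax (Q W ABb p1 p2) (Rmax (Q W AB1 p1 p2) (Q W AB2 p1 p2)).

Fixpoint Wit (n : nat) : R -> R -> R :=
  match n with
  | O => fun _ _ => 0
  | S k => Bell (Wit k)
  end.

Definition symmetric_on01 (W : R -> R -> R) : Prop :=
  forall x y, in01 x -> in01 y -> W x y = W y x.

Definition convex_first (W : R -> R -> R) : Prop :=
  forall x1 x2 y t, in01 x1 -> in01 x2 -> in01 y -> in01 t ->
    W (mix t x1 x2) y <= mix t (W x1 y) (W x2 y).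

Lemma Vact_swap (W : R -> R -> R) (p1 p2 : R) :
  symmetric_on01 W -> in01 p1 -> in01 p2 ->
  Q W ABb p2 p1 = Q W ABb p1 p2 /\ Q W AB2 p2 p1 = Q W AB1 p1 p2.
Proof.
  intros HS Ip1 Ip2; pose proof (Tmap_in01 _ Ip2); simpl; split.
  - rewrite (HS l1 l0) by auto; ring.
  - rewrite (HS (T p2) l0), (HS (T p2) l1) by auto; ring.
Qed.

Lemma Bell_symmetric (W : R -> R -> R) :
  symmetric_on01 W -> symmetric_on01 (Bell W).
Proof.
  intros HS x y Ix Iy; unfold Bell.
  destruct (Vact_swap W x y HS Ix Iy) as [Eb E2].
  destruct (Vact_swap W y x HS Iy Ix) as [_ E1].
  rewrite Eb, E2, E1, (Rmax_comm (Q W AB1 y x)); reflexivity.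
Qed.

(* B_b and B_1 are affine in p1; B_2 is convex in p1 when W is. *)
Lemma Bell_convex (W : R -> R -> R) : convex_first W -> convex_first (Bell W).
Proof.
  intros HC x1 x2 y t Ix1 Ix2 Iy It; unfold Bell.
  apply max3_convex; [exact It| | |].
  - right; unfold mix; simpl; ring.
  - right; unfold mix; simpl; ring.
  - pose proof (Tmap_in01 _ Ix1); pose proof (Tmap_in01 _ Ix2).
    assert (Hcont : mix y (W (T (mix t x1 x2)) l0) (W (T (mix t x1 x2)) l1) <=
                    mix y (mix t (W (T x1) l0) (W (T x2) l0))
                          (mix t (W (T x1) l1) (W (T x2) l1))).
    { rewrite Tmap_mix; apply mix_le_compat; auto. }
    apply Rmult_le_compat_l with (r := beta) in Hcont; [|lra].
    simpl; unfold mix in *; nra.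
Qed.

Lemma Wit_symmetric (n : nat) : symmetric_on01 (Wit n).
Proof.
  induction n as [|n IH]; simpl.
  - intros x y _ _; reflexivity.
  - apply Bell_symmetric, IH.
Qed.

Lemma Wit_convex (n : nat) : convex_first (Wit n).
Proof.
  induction n as [|n IH]; simpl.
  - intros x1 x2 y t _ _ _ _; unfold mix; lra.
  - apply Bell_convex, IH.
Qed.

Section OptimalValue.

Variables (V : R -> R -> R) (M : R).
Hypothesis Hbeta1 : beta < 1.
Hypothesis HM : forall p1 p2, in01 p1 -> in01 p2 -> Rabs (V p1 p2) <= M.
Hypothesis HB : forall p1 p2, in01 p1 -> in01 p2 -> V p1 p2 = Bell V p1 p2.

Lemma M_nonneg : 0 <= M.
Proof. pose proof (HM l0 l0 I0 I0); pose proof (Rabs_pos (V l0 l0)); lra. Qed.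

Lemma value_iteration_error (n : nat) (p1 p2 : R) : in01 p1 -> in01 p2 ->
  Rabs (V p1 p2 - Wit n p1 p2) <= M * beta ^ n.
Proof.
  revert p1 p2; induction n as [|n IH]; intros p1 p2 Ip1 Ip2; simpl.
  - rewrite Rminus_0_r, Rmult_1_r; auto.
  - rewrite HB by assumption; unfold Bell.
    replace (M * (beta * beta ^ n)) with (beta * (M * beta ^ n)) by ring.
    repeat apply Rmax_dist_le; apply Vact_contraction; auto.
Qed.

Lemma value_iteration_bounds (n : nat) (p1 p2 : R) : in01 p1 -> in01 p2 ->
  Wit n p1 p2 - M * beta ^ n <= V p1 p2 <= Wit n p1 p2 + M * beta ^ n.
Proof.
  intros Ip1 Ip2; pose proof (Rabs_le_inv _ _ (value_iteration_error n _ _ Ip1 Ip2)).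
  lra.
Qed.

Lemma V_symmetric : symmetric_on01 V.
Proof.
  assert (Hle : forall x y, in01 x -> in01 y -> V x y <= V y x).
  { intros x y Ix Iy.
    enough (V x y - V y x <= 0) by lra.
    apply (le_0_of_geometric beta _ (2 * M)); [lra|pose proof M_nonneg; lra|].
    intro n; pose proof (value_iteration_bounds n _ _ Ix Iy).
    pose proof (value_iteration_bounds n _ _ Iy Ix).
    rewrite (Wit_symmetric n y x) in * by auto; lra. }
  intros x y Ix Iy; apply Rle_antisym; auto.
Qed.

Lemma V_convex : convex_first V.
Proof.
  intros x1 x2 y t Ix1 Ix2 Iy It.
  enough (V (mix t x1 x2) y - mix t (V x1 y) (V x2 y) <= 0) by lra.
  apply (le_0_of_geometric beta _ (2 * M)); [lra|pose proof M_nonneg; lra|].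
  intro n; unfold in01 in It.
  pose proof (value_iteration_bounds n _ _ (mix_in01 _ _ _ It Ix1 Ix2) Iy).
  pose proof (value_iteration_bounds n _ _ Ix1 Iy).
  pose proof (value_iteration_bounds n _ _ Ix2 Iy).
  pose proof (Wit_convex n x1 x2 y t Ix1 Ix2 Iy It).
  assert (0 <= M * beta ^ n) by (apply Rmult_le_pos; [apply M_nonneg|apply pow_le; lra]).
  unfold mix in *; nra.
Qed.

Hypothesis HRl : 0 <= Rl.
Hypothesis HRh : Rh < 2 * Rl.

(* Below the diagonal, sensing only channel 2 is never better than sensing
   both: the reward loss is covered by R_h < 2 R_l, the continuation loss by
   convexity of V, since T p1 is the p1-average of l0 and l1. *)
Lemma Bb_ge_B2 (p1 p2 : R) : in01 p1 -> in01 p2 -> p2 <= p1 ->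
  Q V AB2 p1 p2 <= Q V ABb p1 p2.
Proof.
  intros Ip1 Ip2 Hp.
  assert (Hcont : mix p2 (V (T p1) l0) (V (T p1) l1) <=
                  mix p2 (mix p1 (V l0 l0) (V l1 l0)) (mix p1 (V l0 l1) (V l1 l1))).
  { rewrite Tmap_as_mix; apply mix_le_compat; try apply V_convex; auto. }
  apply Rmult_le_compat_l with (r := beta) in Hcont; [|lra].
  assert (Hrew : p2 * Rh <= p1 * Rl + p2 * Rl).
  { unfold in01 in *.
    assert (p2 * Rh <= p2 * (2 * Rl)) by (apply Rmult_le_compat_l; lra).
    assert (p2 * Rl <= p1 * Rl) by (apply Rmult_le_compat_r; lra).
    lra. }
  simpl; unfold mix in *; nra.
Qed.

Lemma Bb_ge_B1 (p1 p2 : R) : in01 p1 -> in01 p2 -> p1 <= p2 ->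
  Q V AB1 p1 p2 <= Q V ABb p1 p2.
Proof.
  intros Ip1 Ip2 Hp.
  destruct (Vact_swap V p1 p2 V_symmetric Ip1 Ip2) as [Eb E2].
  rewrite <- Eb, <- E2; apply Bb_ge_B2; auto.
Qed.

Lemma Phi_B1_of_not_Bb (p1 p2 : R) : in01 p1 -> in01 p2 -> p2 <= p1 ->
  ~ Phi l0 l1 beta Rl Rh V ABb p1 p2 -> Phi l0 l1 beta Rl Rh V AB1 p1 p2.
Proof.
  intros Ip1 Ip2 Hp HnB; split; [exact Ip1|split; [exact Ip2|]].
  apply (max3_attained_2 _ (Q V ABb p1 p2) _ (Q V AB2 p1 p2)).
  - apply HB; auto.
  - apply Bb_ge_B2; auto.
  - intro E; apply HnB; exact (conj Ip1 (conj Ip2 E)).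
Qed.

Lemma Phi_B2_of_not_Bb (p1 p2 : R) : in01 p1 -> in01 p2 -> p1 <= p2 ->
  ~ Phi l0 l1 beta Rl Rh V ABb p1 p2 -> Phi l0 l1 beta Rl Rh V AB2 p1 p2.
Proof.
  intros Ip1 Ip2 Hp HnB; split; [exact Ip1|split; [exact Ip2|]].
  apply (max3_attained_3 _ (Q V ABb p1 p2) (Q V AB1 p1 p2)).
  - apply HB; auto.
  - apply Bb_ge_B1; auto.
  - intro E; apply HnB; exact (conj Ip1 (conj Ip2 E)).
Qed.

Lemma Phi_swap (p1 p2 : R) :
  (Phi l0 l1 beta Rl Rh V ABb p1 p2 -> Phi l0 l1 beta Rl Rh V ABb p2 p1) /\
  (Phi l0 l1 beta Rl Rh V AB1 p1 p2 -> Phi l0 l1 beta Rl Rh V AB2 p2 p1) /\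
  (Phi l0 l1 beta Rl Rh V AB2 p1 p2 -> Phi l0 l1 beta Rl Rh V AB1 p2 p1).
Proof.
  unfold Phi; split; [|split]; intros [Ip1 [Ip2 E]];
    (split; [exact Ip2|split; [exact Ip1|]]); rewrite V_symmetric, E by auto.
  - symmetry; apply (Vact_swap V p1 p2 V_symmetric Ip1 Ip2).
  - symmetry; apply (Vact_swap V p1 p2 V_symmetric Ip1 Ip2).
  - apply (Vact_swap V p2 p1 V_symmetric Ip2 Ip1).
Qed.

End OptimalValue.

End Model.

Theorem theorem6 (l0 l1 beta Rl Rh : R) (V : R -> R -> R) (rho1 rho2 : R)
  (Hl0 : 0 <= l0) (Hl01 : l0 <= l1) (Hl1 : l1 <= 1)
  (Hbeta : 0 <= beta < 1)
  (HRl : 0 < Rl) (HRlh : Rl < Rh) (HRh : Rh < 2 * Rl)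
  (HV : is_optimal_value l0 l1 beta Rl Rh V)
  (Hrho1 : l0 <= rho1 <= l1) (Hrho2 : l0 <= rho2 <= l1)
  (Hdef1 : forall p1, l0 <= p1 <= l1 ->
             (Phi l0 l1 beta Rl Rh V ABb p1 l0 <-> p1 <= rho1))
  (Hdef2 : forall p1, l0 <= p1 <= l1 ->
             (Phi l0 l1 beta Rl Rh V ABb p1 l1 <-> rho2 <= p1)) :
  (* (a) *)
  (forall p1, l0 <= p1 <= rho1 -> Phi l0 l1 beta Rl Rh V ABb p1 l0) /\
  (forall p1, rho1 < p1 <= l1 -> Phi l0 l1 beta Rl Rh V AB1 p1 l0) /\
  (* (b) *)
  (forall p1, rho2 <= p1 <= l1 -> Phi l0 l1 beta Rl Rh V ABb p1 l1) /\
  (forall p1, l0 <= p1 < rho2 -> Phi l0 l1 beta Rl Rh V AB2 p1 l1) /\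
  (* (c) *)
  (forall p2, l0 <= p2 <= rho1 -> Phi l0 l1 beta Rl Rh V ABb l0 p2) /\
  (forall p2, rho1 < p2 <= l1 -> Phi l0 l1 beta Rl Rh V AB2 l0 p2) /\
  (* (d) *)
  (forall p2, rho2 <= p2 <= l1 -> Phi l0 l1 beta Rl Rh V ABb l1 p2) /\
  (forall p2, l0 <= p2 < rho2 -> Phi l0 l1 beta Rl Rh V AB1 l1 p2).
Proof.
  destruct HV as [[M HM] HB].
  assert (Hin : forall p, l0 <= p <= l1 -> in01 p) by (intros p Hp; unfold in01; lra).
  destruct Hbeta as [Hbeta0 Hbeta1].
  pose proof (Phi_swap _ _ _ _ _ Hl0 Hl01 Hl1 Hbeta0 V M Hbeta1 HM HB) as Hswap.
  (* (a), (b): below (above) the diagonal B_b competes only with B_1 (B_2),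
     and the thresholds decide when B_b is optimal. *)
  assert (Ha : forall p1, rho1 < p1 <= l1 -> Phi l0 l1 beta Rl Rh V AB1 p1 l0).
  { intros p1 Hp.
    apply (Phi_B1_of_not_Bb _ _ _ _ _ Hl0 Hl01 Hl1 Hbeta0 V M Hbeta1 HM HB);
      [lra | lra | apply Hin; lra | apply Hin; lra | lra |].
    intro Hbb; apply Hdef1 in Hbb; lra. }
  assert (Hb : forall p1, l0 <= p1 < rho2 -> Phi l0 l1 beta Rl Rh V AB2 p1 l1).
  { intros p1 Hp.
    apply (Phi_B2_of_not_Bb _ _ _ _ _ Hl0 Hl01 Hl1 Hbeta0 V M Hbeta1 HM HB);
      [lra | lra | apply Hin; lra | apply Hin; lra | lra |].
    intro Hbb; apply Hdef2 in Hbb; lra. }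
  (* (c), (d): reflect (a), (b) across the diagonal. *)
  repeat match goal with |- _ /\ _ => split end; intros p Hp.
  - apply Hdef1; lra.
  - apply Ha; lra.
  - apply Hdef2; lra.
  - apply Hb; lra.
  - apply (proj1 (Hswap p l0)), Hdef1; lra.
  - apply (proj1 (proj2 (Hswap p l0))), Ha; lra.
  - apply (proj1 (Hswap p l1)), Hdef2; lra.
  - apply (proj2 (proj2 (Hswap p l1))), Hb; lra.
Qed.
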